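(* As operators on the tensor product of any two finite-dimensional spin representations of $U_q(\mathfrak{su}_2)$, $$Q_2:=1\otimes Q=\mathrm{Tr}_a\big(L^+_{a1}L^+_{a2}L^-_{a2}(L^+_{a1})^{-1}M_a\big),$$ where $Q=(q-q^{-1})^2FE+q^{2H+1}+q^{-2H-1}$.
   Context: $q$ generic complex, $U_q(\mathfrak{su}_2)$ generated by $E,F,q^H$ with $q^HE=qEq^H$, $q^HF=q^{-1}Fq^H$, $[E,F]=(q^{2H}-q^{-2H})/(q-q^{-1})$. An auxiliary space $a\cong\mathbb{C}^2$ (spin $1/2$) is traced over with $\mathrm{Tr}_a$. $L^-$ and $L^+$ are the $2\times2$ matrices with entries in $U_q(\mathfrak{su}_2)$ $$L^-=\begin{pmatrix}q^H&0\\ \frac{q-q^{-1}}{q^{1/2}}E&q^{-H}\end{pmatrix},\qquad L^+=\begin{pmatrix}q^H&\frac{q-q^{-1}}{q^{1/2}}F\\0&q^{-H}\end{pmatrix}$$ (these are the universal $R$-matrix $\mathcal{R}$, resp. $\mathcal{R}_{21}$, with first factor in the spin-$1/2$ representation). $L^\pm_{ai}$ denotes the matrix acting on space $a$ with entries placed in the $i$-th tensor factor; $M_a=\mathrm{diag}(q,q^{-1})$ acting on space $a$. *)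

From HB Require Import structures.
From mathcomp Require Import all_boot all_order all_algebra.
From mathcomp Require Import mxtens.
Set Implicit Arguments. Unset Strict Implicit. Unset Printing Implicit Defensive.
Import Order.TTheory GRing.Theory Num.Theory.
Local Open Scope ring_scope.

Section SpinReps.
Variable C : fieldType.
(* s plays the role of q^{1/2}; hence q = s^2. *)
Variable s : C.

Definition qnum (z : int) : C :=
  (s ^ (z *+ 2) - s ^ ((- z) *+ 2)) / (s ^+ 2 - s ^- 2).

(* Spin j = n/2 representation on C^(n+1), basis e_0..e_n, e_k having
   H-weight m = k - n/2.  Column-vector convention: A i j is the e_i
   component of A e_j. *)
(* q^H : e_k |-> q^m e_k = s^(2k-n) e_k *)
Definition spinK (n : nat) : 'M[C]_n.+1 :=
  \matrix_(i, j) (if i == j then s ^ ((i : nat)%:Z *+ 2 - n%:Z) else 0).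
Definition spinKinv (n : nat) : 'M[C]_n.+1 :=
  \matrix_(i, j) (if i == j then s ^ (n%:Z - (i : nat)%:Z *+ 2) else 0).
Definition spinE (n : nat) : 'M[C]_n.+1 :=
  \matrix_(i, j) ((i : nat) == (j : nat).+1)%:R.
Definition spinF (n : nat) : 'M[C]_n.+1 :=
  \matrix_(i, j) (if (j : nat) == (i : nat).+1
                  then qnum (j : nat)%:Z * qnum (n.+1 - j)%:Z else 0).

Definition spinQ (n : nat) : 'M[C]_n.+1 :=
  (s ^+ 2 - s ^- 2) ^+ 2 *: (spinF n *m spinE n)
  + s ^+ 2 *: (spinK n *m spinK n) + s ^- 2 *: (spinKinv n *m spinKinv n).

(* Operators on V1 (x) V2 (Kronecker product, V1 the outer factor). *)
Definition on1 (n1 n2 : nat) (A : 'M[C]_n1.+1) : 'M[C]_(n1.+1 * n2.+1) :=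
  A *t (1%:M : 'M[C]_n2.+1).
Definition on2 (n1 n2 : nat) (B : 'M[C]_n2.+1) : 'M[C]_(n1.+1 * n2.+1) :=
  (1%:M : 'M[C]_n1.+1) *t B.

(* Operators on a (x) W with a = C^2 and W of dimension N are 2 x 2 block
   matrices with blocks in End(W). *)
Definition aux_mx (N : nat) (a11 a12 a21 a22 : 'M[C]_N) : 'M[C]_(N + N) :=
  block_mx a11 a12 a21 a22.
Definition Tr_a (N : nat) (X : 'M[C]_(N + N)) : 'M[C]_N :=
  ulsubmx X + drsubmx X.

Definition cL : C := (s ^+ 2 - s ^- 2) / s.

Definition Lplus_a1 (n1 n2 : nat) : 'M[C]_(n1.+1 * n2.+1 + n1.+1 * n2.+1) :=
  aux_mx (on1 n2 (spinK n1)) (cL *: on1 n2 (spinF n1))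
         0 (on1 n2 (spinKinv n1)).
Definition Lplus_a2 (n1 n2 : nat) : 'M[C]_(n1.+1 * n2.+1 + n1.+1 * n2.+1) :=
  aux_mx (on2 n1 (spinK n2)) (cL *: on2 n1 (spinF n2))
         0 (on2 n1 (spinKinv n2)).
Definition Lminus_a2 (n1 n2 : nat) : 'M[C]_(n1.+1 * n2.+1 + n1.+1 * n2.+1) :=
  aux_mx (on2 n1 (spinK n2)) 0
         (cL *: on2 n1 (spinE n2)) (on2 n1 (spinKinv n2)).
Definition M_a (N : nat) : 'M[C]_(N + N) :=
  aux_mx ((s ^+ 2)%:M) 0 0 ((s ^- 2)%:M).

End SpinReps.

(* L^+_{a1} is upper triangular with diagonal entries q^{H} (x) 1 and
   q^{-H} (x) 1, so its inverse is explicit, and its entries commute with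
   those of P := L^+_{a2} L^-_{a2}, which act on the other tensor factor.
   Taking the partial trace, the conjugation by L^+_{a1} therefore leaves
   Tr_a (P M_a) = 1 (x) Q, up to a single term proportional to
   (q F q^{-H} - q^{-1} q^{-2H} F q^{H}) (x) q^{-H} E, which vanishes because
   q^{-H} F = q F q^{-H}. *)
From HB Require Import structures.
From mathcomp Require Import all_boot all_order all_algebra.
From mathcomp Require Import mxtens complex reals ring.
Import Order.TTheory GRing.Theory Num.Theory.
Local Open Scope ring_scope.

Section Tensor.
Variable R : comPzRingType.

Lemma tensmxZl m n p q (c : R) (A : 'M[R]_(m, n)) (B : 'M[R]_(p, q)) :
  (c *: A) *t B = c *: (A *t B).
Proof. by apply/matrixP=> i j; rewrite !mxE mulrA. Qed.

Lemma tensmxZr m n p q (c : R) (A : 'M[R]_(m, n)) (B : 'M[R]_(p, q)) :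
  A *t (c *: B) = c *: (A *t B).
Proof. by apply/matrixP=> i j; rewrite !mxE mulrCA. Qed.

Lemma tensmxDr m n p q (A : 'M[R]_(m, n)) (B B' : 'M[R]_(p, q)) :
  A *t (B + B') = A *t B + A *t B'.
Proof. by apply/matrixP=> i j; rewrite !mxE mulrDr. Qed.

Lemma tensmx11 m n : (1%:M : 'M[R]_m.+1) *t (1%:M : 'M[R]_n.+1) = 1%:M.
Proof.
apply/matrixP=> i j; rewrite !mxE -natrM -!val_eqE /=.
rewrite [in RHS](divn_eq i n.+1) [in RHS](divn_eq j n.+1).
by rewrite eq_addl_mul ?ltn_mod // xpair_eqE mulnb.
Qed.

End Tensor.

Section TensorFactors.
Variables (C : fieldType) (n1 n2 : nat).

Lemma on1M (A B : 'M[C]_n1.+1) : on1 n2 (A *m B) = on1 n2 A *m on1 n2 B.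
Proof. by rewrite /on1 tensmx_mul mulmx1. Qed.

Lemma on2M (A B : 'M[C]_n2.+1) : on2 n1 (A *m B) = on2 n1 A *m on2 n1 B.
Proof. by rewrite /on2 tensmx_mul mulmx1. Qed.

Lemma on1Z c (A : 'M[C]_n1.+1) : on1 n2 (c *: A) = c *: on1 n2 A.
Proof. exact: tensmxZl. Qed.

Lemma on2Z c (A : 'M[C]_n2.+1) : on2 n1 (c *: A) = c *: on2 n1 A.
Proof. exact: tensmxZr. Qed.

Lemma on2D (A B : 'M[C]_n2.+1) : on2 n1 (A + B) = on2 n1 A + on2 n1 B.
Proof. exact: tensmxDr. Qed.

Lemma on1_1 : on1 n2 (1%:M : 'M[C]_n1.+1) = 1%:M.
Proof. exact: tensmx11. Qed.

Lemma comm_on1_on2 (A : 'M[C]_n1.+1) (B : 'M[C]_n2.+1) :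
  comm_mx (on1 n2 A) (on2 n1 B).
Proof. by rewrite /comm_mx /on1 /on2 !tensmx_mul !mulmx1 !mul1mx. Qed.

End TensorFactors.

Lemma mulmx1_invmx (R : comUnitRingType) n (A B : 'M[R]_n) :
  A *m B = 1%:M -> invmx A = B.
Proof.
by move=> AB1; have [uA _] := mulmx1_unit AB1; rewrite -(mulKmx uA B) AB1 mulmx1.
Qed.

Lemma invmx_upper_block (R : comUnitRingType) n (A A' B : 'M[R]_n) :
  A *m A' = 1%:M -> A' *m A = 1%:M ->
  invmx (block_mx A B 0 A') = block_mx A' (- (A' *m B *m A)) 0 A.
Proof.
move=> AA' A'A; apply: mulmx1_invmx.
rewrite mulmx_block [1%:M]scalar_mx_block !mul0mx !mulmx0 !addr0 add0r AA' A'A.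
by rewrite mulmxN !mulmxA AA' mul1mx addNr.
Qed.

Lemma Tr_a_conj_upper_block (C : fieldType) n
    (a a' b p11 p12 p21 p22 : 'M[C]_n) (x y : C) :
  a *m a' = 1%:M -> a' *m a = 1%:M ->
  comm_mx a p11 -> comm_mx a p22 -> comm_mx a p21 -> comm_mx a' p21 ->
  comm_mx b p21 ->
  x *: (b *m a') = y *: (a' *m a' *m b *m a) ->
  Tr_a (block_mx a b 0 a' *m block_mx p11 p12 p21 p22
        *m invmx (block_mx a b 0 a') *m block_mx x%:M 0 0 y%:M)
  = x *: p11 + y *: p22.
Proof.
move=> aa' a'a ap11 ap22 ap21 a'p21 bp21 twist.
have p21_a'ba : comm_mx p21 (a' *m b *m a).
  by do 2?apply: comm_mxM; exact: comm_mx_sym.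
rewrite invmx_upper_block // !mulmx_block /Tr_a block_mxKul block_mxKdr.
rewrite !mul0mx !mulmx0 !addr0 !add0r !mul_mx_scalar.
have -> : (a *m p11 + b *m p21) *m a' = p11 + b *m a' *m p21.
  by rewrite mulmxDl ap11 -!mulmxA aa' -a'p21 mulmx1.
have -> : a' *m p21 *m - (a' *m b *m a) + a' *m p22 *m a
          = p22 - a' *m a' *m b *m a *m p21.
  rewrite mulmxN -(mulmxA a' p22) -ap22 mulmxA a'a mul1mx addrC.
  by rewrite -(mulmxA a' p21) p21_a'ba !mulmxA.
rewrite !scalerDr scalerN (scalemxAl x) (scalemxAl y) twist.
by rewrite addrACA subrr addr0.
Qed.

Section SpinRelations.
Variables (C : fieldType) (s : C) (n : nat).
Hypothesis s_neq0 : s != 0.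

Lemma spinK_diag : spinK s n = diag_mx (\row_i s ^ ((i : nat)%:Z *+ 2 - n%:Z)).
Proof. by apply/matrixP=> i j; rewrite !mxE; case: eqP => // ->; rewrite mulr1n. Qed.

Lemma spinKinv_diag :
  spinKinv s n = diag_mx (\row_i s ^ (n%:Z - (i : nat)%:Z *+ 2)).
Proof. by apply/matrixP=> i j; rewrite !mxE; case: eqP => // ->; rewrite mulr1n. Qed.

Lemma spinKKinv : spinK s n *m spinKinv s n = 1%:M.
Proof.
rewrite spinK_diag spinKinv_diag mul_diag_mx; apply/matrixP=> i j; rewrite !mxE.
case: eqP => [->|]; rewrite ?mulr1n ?mulr0n ?mulr0 //.
by rewrite -expfzDr // addrA subrK subrr expr0z.
Qed.

Lemma spinKinvK : spinKinv s n *m spinK s n = 1%:M.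
Proof.
rewrite spinK_diag spinKinv_diag mul_diag_mx; apply/matrixP=> i j; rewrite !mxE.
case: eqP => [->|]; rewrite ?mulr1n ?mulr0n ?mulr0 //.
by rewrite -expfzDr // addrA subrK subrr expr0z.
Qed.

Lemma spinKinvF :
  spinKinv s n *m spinF s n = s ^+ 2 *: (spinF s n *m spinKinv s n).
Proof.
rewrite spinKinv_diag mul_diag_mx mul_mx_diag; apply/matrixP=> i j; rewrite !mxE.
case: eqP => [->|_]; last by rewrite !(mulr0, mul0r).
rewrite [RHS]mulrCA [LHS]mulrC; congr (_ * _).
rewrite exprnP -expfzDr //; congr (s ^ _).
by rewrite -[i.+1]addn1 PoszD !mulr2n; ring.
Qed.

Lemma spinKinv2FK :
  s ^+ 2 *: (spinF s n *m spinKinv s n)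
  = s ^- 2 *: (spinKinv s n *m spinKinv s n *m spinF s n *m spinK s n).
Proof.
rewrite -(mulmxA (spinKinv s n)) spinKinvF -scalemxAr -scalemxAl.
rewrite !mulmxA -(mulmxA _ (spinKinv s n)) spinKinvK mulmx1 spinKinvF !scalerA.
by congr (_ *: _); field.
Qed.

Lemma spinQ_cL :
  spinQ s n =
    s ^+ 2 *: (spinK s n *m spinK s n + cL s ^+ 2 *: (spinF s n *m spinE C n))
    + s ^- 2 *: (spinKinv s n *m spinKinv s n).
Proof.
have cL2 : s ^+ 2 * cL s ^+ 2 = (s ^+ 2 - s ^- 2) ^+ 2 by rewrite /cL; field.
by rewrite /spinQ scalerDr scalerA cL2 (addrC (s ^+ 2 *: _)).
Qed.

End SpinRelations.

Lemma mul_Lplus_Lminus_a2 (C : fieldType) (s : C) n1 n2 :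
  Lplus_a2 s n1 n2 *m Lminus_a2 s n1 n2 =
  block_mx
    (on2 n1 (spinK s n2 *m spinK s n2 + cL s ^+ 2 *: (spinF s n2 *m spinE C n2)))
    (on2 n1 (cL s *: (spinF s n2 *m spinKinv s n2)))
    (on2 n1 (cL s *: (spinKinv s n2 *m spinE C n2)))
    (on2 n1 (spinKinv s n2 *m spinKinv s n2)).
Proof.
rewrite /Lplus_a2 /Lminus_a2 /aux_mx mulmx_block !mul0mx !mulmx0 ?addr0 ?add0r.
by rewrite on2D !on2Z !on2M -!scalemxAl -!scalemxAr scalerA expr2.
Qed.

Lemma on2_spinQE (C : fieldType) (s : C) n1 n2 : s != 0 ->
  on2 n1 (spinQ s n2) =
  Tr_a (Lplus_a1 s n1 n2 *m Lplus_a2 s n1 n2 *m Lminus_a2 s n1 n2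
        *m invmx (Lplus_a1 s n1 n2) *m M_a s (n1.+1 * n2.+1)).
Proof.
move=> s_neq0.
rewrite -(mulmxA (Lplus_a1 s n1 n2)) mul_Lplus_Lminus_a2 /Lplus_a1 /M_a /aux_mx.
rewrite -on1Z Tr_a_conj_upper_block; try exact: comm_on1_on2.
- by rewrite spinQ_cL // on2D !on2Z.
- by rewrite -on1M spinKKinv // on1_1.
- by rewrite -on1M spinKinvK // on1_1.
- rewrite -!on1M -!on1Z; congr on1.
  rewrite -scalemxAl -scalemxAr -scalemxAl !scalerA.
  by rewrite (mulrC (s ^+ 2)) (mulrC (s ^- 2)) -!(scalerA (cL s)) spinKinv2FK.
Qed.

Theorem propositionB1 (R : realType) (s : R[i]) (n1 n2 : nat) :
  s != 0 ->
  (forall k : nat, (0 < k)%N -> (s ^+ 2) ^+ k != 1) ->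
  on2 n1 (spinQ s n2) =
  Tr_a (Lplus_a1 s n1 n2 *m Lplus_a2 s n1 n2 *m Lminus_a2 s n1 n2
        *m invmx (Lplus_a1 s n1 n2) *m M_a s (n1.+1 * n2.+1)).
Proof.
by move=> s_neq0 _; apply: on2_spinQE.
Qed.
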